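(* For every positively weighted finite graph $(G,w)$, every vertex $v$ of $G$ and every natural number $r\ge 1$, $$\lambda_1(G(v,r),w)\ge \lambda_1(\widetilde{G}(v,r),w).$$
   Context: A weighted graph $(G,w)$ is a simple graph with $w\colon E(G)\to\mathbb{R}^+$; subgraphs inherit the restricted weight. The ball $G(v,r)$ is the subgraph of $G$ induced on the vertices at distance at most $r$ from $v$. A non-backtracking walk is a walk $(v_0,v_1,\dots)$ with $v_i\ne v_{i+2}$ for all $i$. The unraveled ball $\widetilde{G}(v,r)$ is the graph whose vertices are the non-backtracking walks in $G$ of length at most $r$ starting at $v$, two walks adjacent iff one is a one-step extension of the other, with the edge between $(v_0,\dots,v_{i-1})$ and $(v_0,\dots,v_i)$ weighted $w(v_{i-1}v_i)$. $\lambda_1(H,w)$ denotes the spectral radius of the weighted adjacency matrix of $(H,w)$ (entry $w(uv)$ if $uv$ is an edge, $0$ otherwise). *)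

From HB Require Import structures.
From mathcomp Require Import all_boot all_order all_algebra.
From mathcomp Require Import complex.
From mathcomp Require Import reals.

Set Implicit Arguments.
Unset Strict Implicit.
Unset Printing Implicit Defensive.

Import Order.TTheory GRing.Theory Num.Theory.
Local Open Scope ring_scope.

Definition simple_graph (T : finType) (e : rel T) : Prop :=
  symmetric e /\ irreflexive e.

(* A positive weighting of the edges of (T, e): a symmetric function
   w : T -> T -> R whose values on edges are positive (values on
   non-edges are irrelevant). *)
Definition pos_weight (R : realType) (T : finType) (e : rel T)
  (w : T -> T -> R) : Prop :=
  (forall x y, w x y = w y x) /\ (forall x y, e x y -> 0 < w x y).

(* Spectral radius of a real square matrix: the maximum modulus of its
   complex eigenvalues (the roots, with multiplicity, of its
   characteristic polynomial over R[i]). *)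
Definition spectral_radius (R : realType) (n : nat) (A : 'M[R]_n) : R :=
  \big[Num.max/0]_(z <- sval (closed_field_poly_normal
                          (char_poly (map_mx (real_complex R) A))))
     ComplexField.Normc.normc z.

(* The weighted adjacency matrix of the weighted graph whose vertices are
   the (distinct) entries of the list s, with weighted adjacency W
   (W x y = weight of xy if xy is an edge, 0 otherwise). *)
Definition wadj_mx (R : realType) (V : eqType) (x0 : V) (s : seq V)
  (W : V -> V -> R) : 'M[R]_(size s) :=
  \matrix_(i < size s, j < size s) W (nth x0 s i) (nth x0 s j).

Definition lambda1 (R : realType) (V : eqType) (x0 : V) (s : seq V)
  (W : V -> V -> R) : R := spectral_radius (wadj_mx x0 s W).

Definition seqs_of_size (T : finType) (k : nat) : seq (seq T) :=
  [seq tval t | t : k.-tuple T].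

Definition is_walk (T : finType) (e : rel T) (v : T) (p : seq T) : bool :=
  if p is x :: q then (x == v) && path e x q else false.

Definition non_backtracking (T : finType) (v : T) (p : seq T) : bool :=
  [forall i : 'I_(size p), (i.+2 < size p)%N ==> (nth v p i != nth v p i.+2)].

(* All walks from v of length (number of edges) at most r. *)
Definition walks_le (T : finType) (e : rel T) (v : T) (r : nat) : seq (seq T) :=
  flatten [seq [seq p <- seqs_of_size T k.+1 | is_walk e v p] | k <- iota 0 r.+1].

Definition nb_walks_le (T : finType) (e : rel T) (v : T) (r : nat) : seq (seq T) :=
  [seq p <- walks_le e v r | non_backtracking v p].

(* Vertices at distance at most r from v: endpoints of walks from v of
   length at most r. *)
Definition ball_set (T : finType) (e : rel T) (v : T) (r : nat) : {set T} :=
  [set x | has (fun p => last v p == x) (walks_le e v r)].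

(* lambda_1 of the ball G(v,r): the subgraph induced on ball_set,
   with the restricted weight. *)
Definition lambda1_ball (R : realType) (T : finType) (e : rel T)
  (w : T -> T -> R) (v : T) (r : nat) : R :=
  lambda1 v (enum (ball_set e v r)) (fun x y => if e x y then w x y else 0).

(* Weighted adjacency of the unraveled ball: walks p, q are adjacent iff
   one is a one-step extension of the other; the edge between
   (v_0..v_{i-1}) and (v_0..v_i) has weight w(v_{i-1} v_i). *)
Definition unravel_adj (R : realType) (T : finType) (w : T -> T -> R) (v : T)
  (p q : seq T) : R :=
  if (q == rcons p (last v q)) || (p == rcons q (last v p))
  then w (last v p) (last v q) else 0.

Definition lambda1_unraveled (R : realType) (T : finType) (e : rel T)
  (w : T -> T -> R) (v : T) (r : nat) : R :=
  lambda1 [:: v] (nb_walks_le e v r) (unravel_adj w v).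

(* For a nonnegative matrix A, lambda_1(A) <= c as soon as <f, A f> <= c |f|^2
   for every nonnegative f (test this on the moduli of an eigenvector), while
   <g, B g> <= lambda_1(B) |g|^2 for a symmetric B by the spectral theorem.
   Given f >= 0 on the non-backtracking walks, let gamma(x) be the l2-norm of
   f over the walks ending at x, so that |gamma| = |f|.  Among the neighbours
   of a walk p in the unraveled ball, at most one ends at a given vertex y:
   if the parent of p ends at y, then p extended by y backtracks.  So walks
   ending at x and walks ending at y are adjacent along a partial matching,
   and Cauchy-Schwarz bounds that block of <f, A~ f> by w(xy) gamma(x)
   gamma(y), whence <f, A~ f> <= <gamma, A gamma> <= lambda_1(G(v,r)) |f|^2. *)

From HB Require Import structures.
From mathcomp Require Import all_boot all_order all_algebra.
From mathcomp Require Import complex.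
From mathcomp Require Import reals.
From mathcomp Require Import spectral sesquilinear.
From mathcomp Require Import ring.
Import Order.TTheory GRing.Theory Num.Theory.
Local Open Scope ring_scope.

Set Implicit Arguments.
Unset Strict Implicit.
Unset Printing Implicit Defensive.

Section SpectralRadius.
Local Open Scope complex_scope.
Local Open Scope sesquilinear_scope.
Variable R : realType.
Local Notation C := R[i].
Local Notation normc := (@ComplexField.Normc.normc R).
Local Notation cplx := (map_mx (real_complex R)).

Definition quad_form n (A : 'M[R]_n) (f : 'I_n -> R) : R :=
  \sum_i \sum_j f i * A i j * f j.

Lemma spectral_radius_ge0 n (A : 'M[R]_n) : 0 <= spectral_radius A.
Proof. exact: bigmax_ge_id. Qed.

Lemma spectral_radiusE n (A : 'M[R]_n) : exists s : seq C,
  spectral_radius A = \big[Num.max/0]_(z <- s) normc z /\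
  forall z, (z \in s) = eigenvalue (cplx A) z.
Proof.
rewrite /spectral_radius; case: closed_field_poly_normal => s /= sE.
exists s; split=> // z; rewrite eigenvalue_root_char sE rootZ ?root_prod_XsubC //.
by rewrite lead_coef_eq0 -size_poly_eq0 size_char_poly.
Qed.

Lemma eigenvalue_le_spectral_radius n (A : 'M[R]_n) z :
  eigenvalue (cplx A) z -> normc z <= spectral_radius A.
Proof.
have [s [-> sE]] := spectral_radiusE A.
by rewrite -sE => zs; apply: le_bigmax_seq.
Qed.

Lemma spectral_radius_le n (A : 'M[R]_n) c : 0 <= c ->
  (forall z, eigenvalue (cplx A) z -> normc z <= c) -> spectral_radius A <= c.
Proof.
have [s [-> sE]] := spectral_radiusE A => c0 Hc.
by rewrite big_seq bigmax_le // => z; rewrite sE; apply: Hc.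
Qed.

Lemma conjC_real_complex (x : R) : Num.conj (x%:C : C) = x%:C.
Proof. exact: conjc_real. Qed.

Lemma cplx_hermsymmx n (B : 'M[R]_n) : B^T = B -> cplx B \is hermsymmx.
Proof.
move=> Bsym; apply/is_hermitianmxP; rewrite expr0 scale1r.
by apply/matrixP => i j; rewrite !mxE conjC_real_complex -[in LHS]Bsym mxE.
Qed.

Lemma spectral_diag_le_spectral_radius n (B : 'M[R]_n) k : B^T = B ->
  normc (spectral_diag (cplx B) 0 k) <= spectral_radius B.
Proof.
move=> /cplx_hermsymmx/hermitian_normalmx/orthomx_spectralP BE.
set P := spectralmx (cplx B) in BE; set d := spectral_diag (cplx B) in BE *.
have PU : P \is unitarymx := spectral_unitarymx (cplx B).
have PPt : P *m P^t* = 1%:M by apply/unitarymxP.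
rewrite invmx_unitary // in BE.
apply: eigenvalue_le_spectral_radius; apply/eigenvalueP; exists (row k P).
  have : P *m cplx B = diag_mx d *m P by rewrite BE !mulmxA PPt mul1mx.
  by move/(congr1 (row k)); rewrite !row_mul row_diag_mx -scalemxAl -rowE.
apply/eqP => /(congr1 (mulmx ^~ (P^t*))); rewrite -row_mul PPt mul0mx.
by move/rowP/(_ k); rewrite !mxE eqxx /= => /eqP; rewrite oner_eq0.
Qed.

Lemma quad_form_le_spectral_radius n (B : 'M[R]_n) (g : 'I_n -> R) : B^T = B ->
  quad_form B g <= spectral_radius B * \sum_i g i ^+ 2.
Proof.
move=> Bsym; have := Bsym => /cplx_hermsymmx/hermitian_normalmx/orthomx_spectralP BE.
set P := spectralmx (cplx B) in BE; set d := spectral_diag (cplx B) in BE.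
have PU : P \is unitarymx := spectral_unitarymx (cplx B).
have PtP : P^t* *m P = 1%:M.
  by rewrite -invmx_unitary // mulVmx // unitarymx_unit.
rewrite invmx_unitary // in BE.
pose u : 'rV[C]_n := \row_i (g i)%:C.
pose v := u *m P^t*.
have vt : v^t* = P *m u^t* by rewrite trmx_mul map_mxM trmxCK.
have quadE : (quad_form B g)%:C = \sum_k d 0 k * `|v 0 k| ^+ 2.
  have -> : (quad_form B g)%:C = (u *m cplx B *m u^t*) 0 0.
    rewrite /quad_form exchange_big rmorph_sum /= mxE; apply: eq_bigr => j _.
    rewrite mxE big_distrl rmorph_sum; apply: eq_bigr => i _.
    by rewrite !mxE conjC_real_complex !rmorphM.
  rewrite BE !mulmxA -(mulmxA _ P) -vt -/v mxE.
  by apply: eq_bigr => k _; rewrite mul_mx_diag !mxE normCK mulrAC mulrC.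
have normE : \sum_k `|v 0 k| ^+ 2 = (\sum_i g i ^+ 2)%:C.
  have -> : \sum_k `|v 0 k| ^+ 2 = (v *m v^t*) 0 0.
    by rewrite mxE; apply: eq_bigr => k _; rewrite !mxE normCK.
  rewrite vt /v mulmxA -(mulmxA u) PtP mulmx1 mxE rmorph_sum.
  by apply: eq_bigr => i _; rewrite !mxE conjC_real_complex rmorphXn.
suff : (quad_form B g)%:C <= (spectral_radius B)%:C * (\sum_i g i ^+ 2)%:C.
  by rewrite -rmorphM lecR.
rewrite -normE mulr_sumr; apply: le_trans (real_ler_norm _) _.
  by apply/complex_realP; eexists.
rewrite quadE; apply: le_trans (ler_norm_sum _ _ _) _; apply: ler_sum => k _.
rewrite normrM [X in _ * X]ger0_norm ?exprn_ge0 // ler_wpM2r ?exprn_ge0 //.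
by rewrite -[`|_|]/(normc _)%:C lecR spectral_diag_le_spectral_radius.
Qed.

Lemma spectral_radius_le_quad_form n (A : 'M[R]_n) c :
  0 <= c -> (forall i j, 0 <= A i j) ->
  (forall f : 'I_n -> R, (forall i, 0 <= f i) ->
     quad_form A f <= c * \sum_i f i ^+ 2) ->
  spectral_radius A <= c.
Proof.
move=> c0 A0 Aquad; apply: spectral_radius_le => // z /eigenvalueP [u uA u0].
pose f i := normc (u 0 i).
have f0 i : 0 <= f i by rewrite -ler0c; exact: (normr_ge0 (u 0 i)).
have col_le j : normc z * f j <= \sum_i f i * A i j.
  rewrite -lecR rmorphM rmorph_sum.
  have -> : (normc z)%:C * (f j)%:C = `|(u *m cplx A) 0 j| by rewrite uA mxE normrM.
  rewrite mxE; apply: le_trans (ler_norm_sum _ _ _) _; apply: ler_sum => i _.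
  by rewrite normrM rmorphM mxE [X in _ * X]ger0_norm // ler0c.
have quad_ge : normc z * \sum_i f i ^+ 2 <= quad_form A f.
  rewrite /quad_form exchange_big /= mulr_sumr; apply: ler_sum => j _.
  by rewrite -big_distrl /= expr2 mulrA ler_wpM2r.
have norm_gt0 : 0 < \sum_i f i ^+ 2.
  have [j uj0] : exists j, u 0 j != 0.
    apply/existsP; apply: contraR u0 => /existsPn uj0; apply/eqP/rowP => j.
    by rewrite mxE; apply/eqP/negbNE.
  rewrite (bigD1 j) //= ltr_pwDl ?sumr_ge0 // => [|i _]; last exact: sqr_ge0.
  rewrite exprn_gt0 // lt_def f0 andbT; apply: contra uj0 => /eqP.
  by move/ComplexField.Normc.eq0_normc ->.
by rewrite -(ler_pM2r norm_gt0); apply: le_trans quad_ge (Aquad f f0).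
Qed.

End SpectralRadius.

Section CauchySchwarz.
Variable R : rcfType.

Lemma lagrange_identity (I : Type) (s : seq I) (a b : I -> R) :
  \sum_(i <- s) \sum_(j <- s) (a i * b j - a j * b i) ^+ 2 =
  ((\sum_(i <- s) a i ^+ 2) * (\sum_(i <- s) b i ^+ 2) -
   (\sum_(i <- s) a i * b i) ^+ 2) *+ 2.
Proof.
have sqrE i j : (a i * b j - a j * b i) ^+ 2 =
    a i ^+ 2 * b j ^+ 2 + a j ^+ 2 * b i ^+ 2 - (a i * b i) * (a j * b j) *+ 2.
  by rewrite !mulr2n; ring.
under eq_bigr do under eq_bigr do rewrite sqrE.
under eq_bigr do rewrite sumrB big_split /= sumrMnl.
rewrite sumrB big_split /= sumrMnl [X in _ + X - _]exchange_big /=.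
by rewrite mulrnBl mulr2n expr2 !big_distrlr.
Qed.

Lemma sum_sqr_ge0 (I : Type) (s : seq I) (c : I -> R) :
  0 <= \sum_(i <- s) c i ^+ 2.
Proof. by apply: sumr_ge0 => i _; apply: sqr_ge0. Qed.

Lemma cauchy_schwarz_sum (I : Type) (s : seq I) (a b : I -> R) :
  \sum_(i <- s) a i * b i <=
  Num.sqrt (\sum_(i <- s) a i ^+ 2) * Num.sqrt (\sum_(i <- s) b i ^+ 2).
Proof.
rewrite -sqrtrM ?sum_sqr_ge0 //; apply: le_trans (ler_norm _) _; rewrite -sqrtr_sqr.
rewrite ler_sqrt ?mulr_ge0 ?sum_sqr_ge0 // -subr_ge0 -(pmulrn_lge0 _ (ltn0Sn 1)).
by rewrite -lagrange_identity sumr_ge0 // => i _; apply: sum_sqr_ge0.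
Qed.

Lemma sum_count_le1 (I : eqType) (J : Type) (s : seq I) (t : seq J)
    (m : I -> J -> bool) (F : I -> R) :
  (forall i, 0 <= F i) -> {in s, forall i, (count (m i) t <= 1)%N} ->
  \sum_(i <- s) \sum_(j <- t | m i j) F i <= \sum_(i <- s) F i.
Proof.
move=> F0 mt; rewrite big_seq [X in _ <= X]big_seq; apply: ler_sum => i si.
by rewrite big_const_seq iter_addr_0 -mulr_natr ler_piMr // lern1 mt.
Qed.

Lemma sum_matching_le (I J : eqType) (s : seq I) (t : seq J)
    (m : I -> J -> bool) (a : I -> R) (b : J -> R) :
  {in s, forall i, (count (m i) t <= 1)%N} ->
  {in t, forall j, (count (m^~ j) s <= 1)%N} ->
  \sum_(i <- s) \sum_(j <- t | m i j) a i * b j <=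
  Num.sqrt (\sum_(i <- s) a i ^+ 2) * Num.sqrt (\sum_(j <- t) b j ^+ 2).
Proof.
move=> ms mt; set st := [seq (i, j) | i <- s, j <- t].
have pairsE (F : I -> J -> R) : \sum_(i <- s) \sum_(j <- t | m i j) F i j =
    \sum_(k <- st | m k.1 k.2) F k.1 k.2.
  rewrite [RHS]big_mkcond big_allpairs /=.
  by apply: eq_bigr => i _; rewrite big_mkcond.
rewrite pairsE -big_filter; apply: le_trans (cauchy_schwarz_sum _ _ _) _.
rewrite !big_filter -(pairsE (fun i _ => a i ^+ 2)) -(pairsE (fun _ j => b j ^+ 2)).
apply: ler_pM; rewrite ?sqrtr_ge0 // ler_sqrt ?sum_sqr_ge0 //.
  by apply: sum_count_le1 => // i; apply: sqr_ge0.
under eq_bigr do rewrite big_mkcond; rewrite exchange_big /=.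
under eq_bigr do rewrite -big_mkcond.
by apply: sum_count_le1 => // j; apply: sqr_ge0.
Qed.

End CauchySchwarz.

Definition unravel_edge (T : eqType) (v : T) (p q : seq T) : bool :=
  (q == rcons p (last v q)) || (p == rcons q (last v p)).

Lemma unravel_edgeC (T : eqType) (v : T) : symmetric (unravel_edge v).
Proof. by move=> p q; rewrite /unravel_edge orbC. Qed.

Lemma uniq_flatten_sized (T : eqType) (L : nat -> seq (seq T)) (ks : seq nat) :
  uniq ks -> (forall k, uniq (L k)) -> (forall k p, p \in L k -> size p = k.+1) ->
  uniq (flatten [seq L k | k <- ks]).
Proof.
move=> + uL sL; elim: ks => //= k ks IH /andP[kks uks].
rewrite cat_uniq uL IH // andbT; apply/hasPn => p /flatten_mapP [k' k'ks pk'].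
apply/negP => pk; move: kks; have := sL _ _ pk; rewrite (sL _ _ pk') => -[<-].
by rewrite k'ks.
Qed.

Lemma count_le1 (I : eqType) (a : pred I) (s : seq I) :
  uniq s -> {in s &, forall x y, a x -> a y -> x = y} -> (count a s <= 1)%N.
Proof.
move=> us aE; rewrite -size_filter.
case sa: (filter a s) => [//|x t]; rewrite -sa.
have : x \in filter a s by rewrite sa mem_head.
rewrite mem_filter => /andP[ax xs].
apply: (@uniq_leq_size _ _ [:: x]); first exact: filter_uniq.
by move=> y; rewrite mem_filter inE => /andP[ay ys]; apply/eqP; apply: aE.
Qed.

Section NonBacktrackingWalks.
Variables (T : finType) (e : rel T) (v : T) (r : nat).
Hypothesis esym : symmetric e.
Local Notation W := (nb_walks_le e v r).

Lemma backtracking_rcons (x : T) (q : seq T) : q != [::] ->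
  ~~ non_backtracking v (rcons (rcons q x) (last v q)).
Proof.
move=> q0; have sq : (0 < size q)%N by rewrite lt0n size_eq0.
have lt_q : ((size q).-1 < size (rcons (rcons q x) (last v q)))%N.
  by rewrite !size_rcons ltnS (leq_trans (leq_pred _) (leqnSn _)).
apply/forallPn; exists (Ordinal lt_q); rewrite /= !size_rcons prednK // ltnSn /=.
rewrite !nth_rcons size_rcons ltnn eqxx.
have lt_pred : ((size q).-1 < size q)%N by rewrite ltn_predL.
by rewrite lt_pred (ltn_trans lt_pred (ltnSn _)) nth_last eqxx.
Qed.

Lemma uniq_nb_walks_le : uniq W.
Proof.
apply/filter_uniq/uniq_flatten_sized; first exact: iota_uniq.
  by move=> k; rewrite filter_uniq // map_inj_uniq ?enum_uniq //; apply: val_inj.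
by move=> k p; rewrite mem_filter => /andP[_ /mapP[t _ ->]]; rewrite size_tuple.
Qed.

Lemma nb_walks_leP p : p \in W ->
  [/\ is_walk e v p, non_backtracking v p & p \in walks_le e v r].
Proof.
rewrite mem_filter => /andP[nb pw]; split => //.
by move: pw => /flatten_mapP [k _]; rewrite mem_filter => /andP[].
Qed.

Lemma nb_walks_le_cons p : p \in W -> exists p', p = v :: p'.
Proof. by case/nb_walks_leP; case: p => //= a p' /andP[/eqP-> _]; exists p'. Qed.

Lemma last_nb_walks_le p : p \in W -> last v p \in ball_set e v r.
Proof. by case/nb_walks_leP => _ _ pw; rewrite inE; apply/hasP; exists p. Qed.

Lemma is_walk_rcons p z : p != [::] -> is_walk e v (rcons p z) -> e (last v p) z.
Proof. by case: p => //= a p' _ /andP[_]; rewrite rcons_path => /andP[]. Qed.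

Lemma unravel_edge_last p q : p \in W -> q \in W -> unravel_edge v p q ->
  e (last v p) (last v q).
Proof.
have ext_last p' q' : p' \in W -> q' \in W -> q' = rcons p' (last v q') ->
    e (last v p') (last v q').
  move=> pW qW qE; have [p'' pE] := nb_walks_le_cons pW.
  have [qwalk _ _] := nb_walks_leP qW.
  by apply: is_walk_rcons; rewrite -?qE // pE.
move=> pW qW /orP[/eqP qE | /eqP pE]; first exact: ext_last.
by rewrite esym; apply: ext_last.
Qed.

Lemma count_unravel_edge_le1 p y : p \in W ->
  (count (unravel_edge v p) [seq q <- W | last v q == y] <= 1)%N.
Proof.
move=> pW; have no_parent_child q q' : q \in W -> q' \in W ->
    q = rcons p (last v q) -> p = rcons q' (last v p) -> last v q' = last v q -> False.
  move=> qW q'W qE pE lE; have [q'' q'E] := nb_walks_le_cons q'W.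
  have [_ qnb _] := nb_walks_leP qW.
  by move: qnb; rewrite qE pE -lE (negbTE (backtracking_rcons _ _)) // q'E.
apply: count_le1; first exact/filter_uniq/uniq_nb_walks_le.
move=> q1 q2 /[1!mem_filter] /andP[/eqP l1 q1W] /[1!mem_filter] /andP[/eqP l2 q2W].
case/orP => /eqP E1; case/orP => /eqP E2.
- by rewrite E1 E2 l1 l2.
- by case: (no_parent_child q1 q2) => //; rewrite l1 l2.
- by case: (no_parent_child q2 q1) => //; rewrite l1 l2.
- by apply: (@rcons_injl _ (last v p)); rewrite -E1 -E2.
Qed.

End NonBacktrackingWalks.

Section WeightedAdjacency.
Variable R : realType.

Lemma quad_form_wadj_mx (V : eqType) (x0 : V) (s : seq V) (W : V -> V -> R)
    (phi : V -> R) :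
  quad_form (wadj_mx x0 s W) (fun i => phi (nth x0 s i)) =
  \sum_(p <- s) \sum_(q <- s) phi p * W p q * phi q.
Proof.
rewrite [RHS](big_nth x0) big_mkord; apply: eq_bigr => i _.
by rewrite [RHS](big_nth x0) big_mkord; apply: eq_bigr => j _; rewrite mxE.
Qed.

Lemma sum_sqr_nth (V : eqType) (x0 : V) (s : seq V) (phi : V -> R) :
  \sum_(i < size s) phi (nth x0 s i) ^+ 2 = \sum_(p <- s) phi p ^+ 2.
Proof. by rewrite [RHS](big_nth x0) big_mkord. Qed.

Lemma quad_le_lambda1 (V : eqType) (x0 : V) (s : seq V) (W : V -> V -> R)
    (g : V -> R) :
  (forall p q, W p q = W q p) ->
  \sum_(p <- s) \sum_(q <- s) g p * W p q * g q <=
  lambda1 x0 s W * \sum_(p <- s) g p ^+ 2.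
Proof.
move=> Wsym; rewrite -(quad_form_wadj_mx x0) -(sum_sqr_nth x0).
by apply: quad_form_le_spectral_radius; apply/matrixP => i j; rewrite !mxE.
Qed.

Lemma lambda1_le_quad (V : eqType) (x0 : V) (s : seq V) (W : V -> V -> R) c :
  uniq s -> 0 <= c -> {in s &, forall p q, 0 <= W p q} ->
  (forall phi : V -> R, (forall p, 0 <= phi p) ->
     \sum_(p <- s) \sum_(q <- s) phi p * W p q * phi q <=
     c * \sum_(p <- s) phi p ^+ 2) ->
  lambda1 x0 s W <= c.
Proof.
move=> us c0 W0 Wquad; apply: spectral_radius_le_quad_form => // [i j | f f0].
  by rewrite mxE W0 ?mem_nth.
pose phi p := \sum_(i < size s | nth x0 s i == p) f i.
have phiE (i : 'I_(size s)) : phi (nth x0 s i) = f i.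
  rewrite /phi (bigD1 i) //= big1 ?addr0 // => j /andP[/eqP nij ji].
  by move: ji; rewrite -(inj_eq val_inj) /= -(nth_uniq x0 _ _ us) ?nij ?eqxx.
have -> : quad_form (wadj_mx x0 s W) f =
    quad_form (wadj_mx x0 s W) (fun i => phi (nth x0 s i)).
  by apply: eq_bigr => i _; apply: eq_bigr => j _; rewrite !phiE.
under eq_bigr do rewrite -phiE.
by rewrite quad_form_wadj_mx sum_sqr_nth Wquad // => p; apply: sumr_ge0.
Qed.

Lemma sum_partition (I J : eqType) (s : seq I) (ks : seq J) (key : I -> J)
    (F : I -> R) :
  uniq ks -> {in s, forall i, key i \in ks} ->
  \sum_(i <- s) F i = \sum_(k <- ks) \sum_(i <- s | key i == k) F i.
Proof.
move=> uks sks; under [RHS]eq_bigr do rewrite big_mkcond.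
rewrite exchange_big /= big_seq [RHS]big_seq; apply: eq_bigr => i si.
rewrite (bigD1_seq (key i)) ?sks //= eqxx big1 ?addr0 // => k /negbTE.
by rewrite eq_sym => ->.
Qed.

End WeightedAdjacency.

Definition edge_weight (R : realType) (T : finType) (e : rel T) (w : T -> T -> R)
  (x y : T) : R := if e x y then w x y else 0.

Section UnraveledBall.
Variables (R : realType) (T : finType) (e : rel T) (w : T -> T -> R).
Variables (v : T) (r : nat).
Hypothesis esym : symmetric e.
Hypothesis wpos : forall x y, e x y -> 0 < w x y.
Local Notation W := (nb_walks_le e v r).
Local Notation S := (enum (ball_set e v r)).
Variable phi : seq T -> R.
Hypothesis phi0 : forall p, 0 <= phi p.

Definition end_norm (x : T) : R :=
  Num.sqrt (\sum_(p <- W | last v p == x) phi p ^+ 2).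

Lemma sum_sqr_end_norm :
  \sum_(x <- S) end_norm x ^+ 2 = \sum_(p <- W) phi p ^+ 2.
Proof.
rewrite [RHS](sum_partition (ks := S) (key := last v)).
- by apply: eq_bigr => x _; rewrite sqr_sqrtr // sumr_ge0 // => p _; apply: sqr_ge0.
- exact: enum_uniq.
- by move=> p pW; rewrite mem_enum last_nb_walks_le.
Qed.

Lemma unravel_block_le x y :
  \sum_(p <- W | last v p == x) \sum_(q <- W | last v q == y)
     phi p * unravel_adj w v p q * phi q <=
  end_norm x * edge_weight e w x y * end_norm y.
Proof.
rewrite /edge_weight; case: ifP => exy; last first.
  rewrite mulr0 mul0r big_seq_cond big1 // => p /andP[pW /eqP lp].
  rewrite big_seq_cond big1 // => q /andP[qW /eqP lq].
  rewrite /unravel_adj -/(unravel_edge v p q).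
  case: ifP => [/(unravel_edge_last esym pW qW)|]; last by rewrite mulr0 mul0r.
  by rewrite lp lq exy.
rewrite -big_filter; under eq_bigr do rewrite -big_filter.
set s := [seq p <- W | last v p == x]; set t := [seq q <- W | last v q == y].
have -> : \sum_(p <- s) \sum_(q <- t) phi p * unravel_adj w v p q * phi q =
    w x y * \sum_(p <- s) \sum_(q <- t | unravel_edge v p q) phi p * phi q.
  rewrite mulr_sumr big_seq [RHS]big_seq; apply: eq_bigr => p.
  rewrite mem_filter => /andP[/eqP lp _].
  rewrite mulr_sumr [RHS]big_mkcond big_seq [RHS]big_seq; apply: eq_bigr => q.
  rewrite mem_filter => /andP[/eqP lq _].
  rewrite /unravel_adj -/(unravel_edge v p q) lp lq.
  by case: ifP; rewrite ?mulr0 ?mul0r // mulrAC mulrC.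
rewrite [leRHS]mulrAC [leRHS]mulrC; apply: ler_wpM2l; first exact/ltW/wpos.
have end_normE z : end_norm z =
    Num.sqrt (\sum_(p <- [seq p <- W | last v p == z]) phi p ^+ 2).
  by rewrite big_filter.
rewrite !end_normE -/s -/t.
apply: sum_matching_le => [p | q]; rewrite mem_filter => /andP[_ pW].
  exact: count_unravel_edge_le1.
by rewrite (eq_count (unravel_edgeC v ^~ q)); apply: count_unravel_edge_le1.
Qed.

Lemma unravel_quad_le_ball_quad :
  \sum_(p <- W) \sum_(q <- W) phi p * unravel_adj w v p q * phi q <=
  \sum_(x <- S) \sum_(y <- S) end_norm x * edge_weight e w x y * end_norm y.
Proof.
have last_ball p : p \in W -> last v p \in S.
  by rewrite mem_enum; apply: last_nb_walks_le.
rewrite (sum_partition (ks := S) (key := last v)) ?enum_uniq //.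
apply: ler_sum => x _; rewrite exchange_big (sum_partition (ks := S) (key := last v)) ?enum_uniq //.
by apply: ler_sum => y _; rewrite exchange_big; apply: unravel_block_le.
Qed.

End UnraveledBall.

Theorem lemma4p2 (R : realType) (T : finType) (e : rel T) (w : T -> T -> R)
  (v : T) (r : nat) :
  simple_graph e -> pos_weight e w -> (1 <= r)%N ->
  lambda1_unraveled e w v r <= lambda1_ball e w v r.
Proof.
move=> [esym _] [wsym wpos] _.
apply: lambda1_le_quad; [exact: uniq_nb_walks_le | exact: spectral_radius_ge0 | |].
  move=> p q pW qW; rewrite /unravel_adj -/(unravel_edge v p q).
  by case: ifP => // /(unravel_edge_last esym pW qW)/wpos/ltW.
move=> phi phi0; rewrite -sum_sqr_end_norm //.
apply: (le_trans (unravel_quad_le_ball_quad v r esym wpos phi)).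
rewrite /lambda1_ball; apply: quad_le_lambda1 => x y.
by rewrite /edge_weight esym wsym.
Qed.
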